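(* Let $\mathbb{F}$ be any field. For all $n, d \in \mathbb{N}$, there is a polynomial map $P:\mathbb{F}^{\lfloor n^{d}/100\rfloor} \to \mathbb{F}^{n^d}$, each coordinate of which is a polynomial of degree at most $d$, such that every $d$-dimensional tensor $\tau:[n]^{d} \to \mathbb{F}$ of rank at most $n^{d-1}/(100d)$ lies in its image.
   Context: The rank of a tensor $\tau:[n]^d\to\mathbb{F}$ is the least $r$ such that $\tau=\sum_{i=1}^r v_{i,1}\otimes\cdots\otimes v_{i,d}$ with all $v_{i,j}\in\mathbb{F}^n$. Tensors are identified with vectors in $\mathbb{F}^{n^d}$. *)

From HB Require Import structures.
From mathcomp Require Import all_boot all_order all_algebra.
From mathcomp Require Import mpoly.
Set Implicit Arguments. Unset Strict Implicit. Unset Printing Implicit Defensive.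
Import Order.TTheory GRing.Theory Num.Theory.
Local Open Scope ring_scope.

Definition tensor (F : fieldType) (n d : nat) := {ffun 'I_d -> 'I_n} -> F.

Definition has_rank_decomp (F : fieldType) (n d r : nat) (tau : tensor F n d) :=
  exists v : 'I_r -> 'I_d -> 'I_n -> F,
    forall idx : {ffun 'I_d -> 'I_n},
      tau idx = \sum_(i < r) \prod_(j < d) v i j (idx j).

(* rank(tau) <= R  (R rational): the least r with a decomposition is <= R,
   i.e. some decomposition with r <= R terms exists. *)
Definition tensor_rank_le (F : fieldType) (n d : nat) (tau : tensor F n d) (R : rat) :=
  exists r : nat, (r%:R <= R)%R /\ has_rank_decomp r tau.

From HB Require Import structures.
From mathcomp Require Import all_boot all_order all_algebra.
From mathcomp Require Import mpoly.
From mathcomp Require Import zify.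
Set Implicit Arguments. Unset Strict Implicit. Unset Printing Implicit Defensive.
Import Order.TTheory GRing.Theory Num.Theory.
Local Open Scope ring_scope.

(* Let R be the largest integer with R <= n^(d-1)/(100 d).  Introduce one
   variable X_(i,j,k) for each i < R, j < d, k < n, and let P be the
   generic rank-R tensor, P(idx) = sum_i prod_j X_(i, j, idx j): its
   coordinates have degree d, and it uses R d n <= n^d/100 variables.
   A tensor of rank r <= R has a decomposition with exactly R terms
   (pad with zero vectors, using d > 0), and substituting its
   vectors for the variables shows it is a value of P. *)

Lemma leq_divn_of_ler_ratio (R : numFieldType) (r a b : nat) :
  r%:R <= a%:R / b%:R :> R -> (r <= a %/ b)%N.
Proof.
have [->|b_gt0] := posnP b.
  by rewrite invr0 mulr0 lern0 => /eqP ->.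
by rewrite leq_divRL // -(ler_nat R) natrM -ler_pdivlMr ?ltr0n.
Qed.

Lemma card_generic_vars (n d : nat) :
  (n ^ d.-1 %/ (100 * d) * d * n <= n ^ d %/ 100)%N.
Proof.
case: d => [|d]; first by rewrite muln0 mul0n.
rewrite leq_divRL // expnS /=.
have := leq_trunc_div (n ^ d) (100 * d.+1); nia.
Qed.

Definition ord_embed (T : finType) (m : nat) (le_Tm : (#|T| <= m)%N) (t : T)
  : 'I_m := widen_ord le_Tm (enum_rank t).

Lemma ord_embed_inj (T : finType) (m : nat) (le_Tm : (#|T| <= m)%N) :
  injective (ord_embed le_Tm).
Proof. by move=> s t /(congr1 val) /= /val_inj /enum_rank_inj. Qed.

Lemma injective_extend (T T' : finType) (R : Type) (x0 : R) (f : T -> T')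
    (g : T -> R) :
  injective f -> exists x : T' -> R, forall t, x (f t) = g t.
Proof.
move=> f_inj; exists (fun k => if [pick t | f t == k] is Some t then g t else x0).
move=> t; case: pickP => [s /eqP /f_inj -> //|/(_ t)].
by rewrite eqxx.
Qed.

Lemma msize_prod_mpolyX (R : nzRingType) (I : finType) (m : nat) (g : I -> 'I_m) :
  (msize (\prod_(i : I) ('X_(g i) : {mpoly R[m]})) <= #|I|.+1)%N.
Proof.
have -> : \prod_(i : I) ('X_(g i) : {mpoly R[m]}) = 'X_[\sum_(i : I) U_(g i)].
  by elim/big_rec2: _ => [|i mm p _ ->]; rewrite ?mpolyX0 ?mpolyXD.
rewrite msizeX mdeg_sum (eq_bigr (fun _ => 1%N)) ?sum1_card //.
by move=> i _; rewrite mdeg1.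
Qed.

Section RankDecomposition.

Variables (F : fieldType) (n d : nat).

Lemma has_rank_decomp_widen (r1 r2 : nat) (tau : tensor F n d) :
  (0 < d)%N -> (r1 <= r2)%N -> has_rank_decomp r1 tau -> has_rank_decomp r2 tau.
Proof.
move=> d_gt0 le_r12 [v tau_v].
pose w (i : nat) j k := if insub i is Some i1 then v i1 j k else 0.
have w_pad i j k : (r1 <= i)%N -> w i j k = 0.
  by move=> le_r1i; rewrite /w insubF // ltnNge le_r1i.
exists (fun i => w i) => idx; rewrite tau_v.
have -> : \sum_(i < r1) \prod_(j < d) v i j (idx j) =
          \sum_(i < r1) \prod_(j < d) w i j (idx j).
  by apply: eq_bigr => i _; apply: eq_bigr => j _; rewrite /w valK.
rewrite (big_ord_widen _ (fun i => \prod_(j < d) w i j (idx j)) le_r12).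
rewrite big_mkcond; apply: eq_bigr => i _; case: ltnP => // le_r1i.
by rewrite (bigD1 (Ordinal d_gt0)) //= w_pad // mul0r.
Qed.

Lemma has_rank_decomp_of_rank_le (a b : nat) (tau : tensor F n d) :
  tensor_rank_le tau (a%:R / (b * d)%:R) -> has_rank_decomp (a %/ (b * d)) tau.
Proof.
move=> [r [le_r tau_r]]; have le_rq := leq_divn_of_ler_ratio le_r.
have [d0|d_gt0] := posnP d; last exact: has_rank_decomp_widen tau_r.
(* For d = 0 padding fails (empty products are 1), but then the bound is
   a / 0 = 0, so r = 0 = a %/ 0. *)
suff -> : (a %/ (b * d))%N = r by [].
by apply/eqP; rewrite eqn_leq le_rq d0 muln0 divn0.
Qed.

End RankDecomposition.

Section GenericTensor.

Variables (F : fieldType) (n d r m : nat) (f : 'I_r * 'I_d * 'I_n -> 'I_m).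

Definition generic_tensor_poly (idx : {ffun 'I_d -> 'I_n}) : {mpoly F[m]} :=
  \sum_(i < r) \prod_(j < d) 'X_(f (i, j, idx j)).

Lemma msize_generic_tensor_poly idx : (msize (generic_tensor_poly idx) <= d.+1)%N.
Proof.
apply: leq_trans (msize_sum _ _ _) _; apply/bigmax_leqP => i _.
by have := msize_prod_mpolyX F (fun j => f (i, j, idx j)); rewrite card_ord.
Qed.

Lemma meval_generic_tensor_poly (x : 'I_m -> F) idx :
  (generic_tensor_poly idx).@[x] = \sum_(i < r) \prod_(j < d) x (f (i, j, idx j)).
Proof.
rewrite rmorph_sum; apply: eq_bigr => i _.
by rewrite rmorph_prod; apply: eq_bigr => j _; rewrite /= mevalXU.
Qed.

Lemma generic_tensor_poly_surj (tau : tensor F n d) :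
  injective f -> has_rank_decomp r tau ->
  exists x : 'I_m -> F, forall idx, tau idx = (generic_tensor_poly idx).@[x].
Proof.
move=> f_inj [v tau_v].
have [x xf] := injective_extend 0 (fun t => v t.1.1 t.1.2 t.2) f_inj.
exists x => idx; rewrite meval_generic_tensor_poly tau_v.
by under [RHS]eq_bigr do under eq_bigr do rewrite xf.
Qed.

End GenericTensor.

Theorem lemma4p3 (F : fieldType) (n d : nat) :
  exists P : {ffun 'I_d -> 'I_n} -> {mpoly F[(n ^ d %/ 100)%N]},
    (forall idx, (msize (P idx) <= d.+1)%N) /\
    forall tau : tensor F n d,
      tensor_rank_le tau ((n ^ d.-1)%:R / (100 * d)%:R : rat) ->
      exists x : 'I_(n ^ d %/ 100) -> F, forall idx, tau idx = (P idx).@[x].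
Proof.
pose R := (n ^ d.-1 %/ (100 * d))%N.
have le_vars : (#|{: 'I_R * 'I_d * 'I_n}| <= n ^ d %/ 100)%N.
  by rewrite !card_prod !card_ord card_generic_vars.
exists (generic_tensor_poly F (ord_embed le_vars)).
split=> [idx|tau rank_tau]; first exact: msize_generic_tensor_poly.
apply: generic_tensor_poly_surj; first exact: ord_embed_inj.
exact: has_rank_decomp_of_rank_le.
Qed.
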